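(* Let $n\ge 1$, $\nu>0$, and let $\alpha_u,\alpha_y\ge 0$ with $\max\{\alpha_u,\alpha_y\}>0$. Let $M\in\mathbb{R}^{n\times n}$ be diagonal with positive diagonal entries and $L\in\mathbb{R}^{n\times n}$. Let $\mathcal{A}_k\subseteq\{1,\dots,n\}$ and let $\Pi_k$ be the diagonal matrix with $(\Pi_k)_{ii}=1$ if $i\in\mathcal{A}_k$ and $0$ otherwise. Set $\gamma_1=\frac{\alpha_y^2\nu}{\alpha_y^2\nu+\alpha_u^2}$, $\gamma_2=\frac{\alpha_u^2}{\alpha_y^2\nu+\alpha_u^2}$, $$\mathbb{S}_k=\nu LM^{-1}L^T+M-\frac{1}{\alpha_y^2\nu+\alpha_u^2}(\alpha_y\nu LM^{-1}-\alpha_u I)\Pi_k M\Pi_k(\alpha_y\nu LM^{-1}-\alpha_u I)^T,$$ $L_1=\sqrt{\nu}L(I-\gamma_1\Pi_k)^{1/2}+(I-\gamma_2\Pi_k)^{1/2}M$ and $\widehat{\mathbb{S}}_k=L_1M^{-1}L_1^T$. If $\mathcal{A}_k=\{1,\dots,n\}$, then $\widehat{\mathbb{S}}_k=\mathbb{S}_k$.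
   Context: Square roots of nonnegative diagonal matrices are taken entrywise. *)

From HB Require Import structures.
From mathcomp Require Import all_boot all_order all_algebra.
Set Implicit Arguments. Unset Strict Implicit. Unset Printing Implicit Defensive.
Import Order.TTheory GRing.Theory Num.Theory.
Local Open Scope ring_scope.

Definition Pimx (R : ringType) (n : nat) (A : {set 'I_n}) : 'M[R]_n :=
  \matrix_(i, j) (if (i == j) && (i \in A) then 1 else 0).

Definition sqrt_diag (R : rcfType) (n : nat) (D : 'M[R]_n) : 'M[R]_n :=
  \matrix_(i, j) (if i == j then Num.sqrt (D i i) else 0).

From HB Require Import structures.
From mathcomp Require Import all_boot all_order all_algebra.
From mathcomp Require Import ring.
Set Implicit Arguments. Unset Strict Implicit. Unset Printing Implicit Defensive.
Import Order.TTheory GRing.Theory Num.Theory.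
Local Open Scope ring_scope.

(* When every index is active, Pi = I, every square root in L1 is a scalar, and
   L1 = a L + b M with a = sqrt (nu gamma2), b = sqrt gamma1.  For a symmetric
   invertible M, (a L + b M) M^-1 (a L + b M)^T = a^2 L M^-1 L^T + ab (L + L^T)
   + b^2 M; the correction term of S has the same shape, because
   alpha_y nu L M^-1 - alpha_u I = (alpha_y nu L - alpha_u M) M^-1.  Comparing
   the three coefficients is then a scalar identity in nu, alpha_u, alpha_y. *)

Lemma Pimx_setT (R : nzRingType) (n : nat) : Pimx R [set: 'I_n] = 1%:M.
Proof.
by apply/matrixP=> i j; rewrite !mxE in_setT andbT; case: eqP.
Qed.

Lemma sqrt_diag_scalar (R : rcfType) (n : nat) (a : R) :
  sqrt_diag (a%:M : 'M_n) = (Num.sqrt a)%:M.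
Proof.
by apply/matrixP=> i j; rewrite !mxE eqxx mulr1n; case: eqP.
Qed.

Lemma diag_trmx (R : nmodType) (n : nat) (M : 'M[R]_n) :
  is_diag_mx M -> M^T = M.
Proof. by case/diag_mxP=> d ->; rewrite tr_diag_mx. Qed.

Lemma diag_unitmx (F : fieldType) (n : nat) (M : 'M[F]_n) :
  is_diag_mx M -> (forall i, M i i != 0) -> M \in unitmx.
Proof.
case/diag_mxP=> d dE nzM; rewrite unitmxE unitfE dE det_diag.
by apply/prodf_neq0=> i _; have := nzM i; rewrite dE mxE eqxx mulr1n.
Qed.

Section SymmetricCongruence.

Variables (R : comUnitRingType) (n : nat) (M : 'M[R]_n).
Hypotheses (M_unit : M \in unitmx) (M_sym : M^T = M).

Lemma invmx_sym : (invmx M)^T = invmx M.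
Proof. by rewrite trmx_inv M_sym. Qed.

Lemma congr_invmx_mulmx (P : 'M[R]_n) :
  P *m invmx M *m M *m (P *m invmx M)^T = P *m invmx M *m P^T.
Proof.
by rewrite -(mulmxA _ (invmx M)) mulVmx // mulmx1 trmx_mul invmx_sym mulmxA.
Qed.

Lemma scale_sub_invmx (L : 'M[R]_n) (a b : R) :
  a *: (L *m invmx M) - b%:M = (a *: L - b *: M) *m invmx M.
Proof.
by rewrite mulmxBl -!scalemxAl mulmxV // scalemx1.
Qed.

Lemma congr_invmx_scaleD (L : 'M[R]_n) (a b : R) :
  (a *: L + b *: M) *m invmx M *m (a *: L + b *: M)^T =
  (a * a) *: (L *m invmx M *m L^T) + (a * b) *: (L + L^T) + (b * b) *: M.
Proof.
have LMiM : L *m invmx M *m M = L by rewrite -mulmxA mulVmx // mulmx1.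
rewrite linearD !linearZ /= M_sym mulmxDl -!scalemxAl mulmxV //.
rewrite mulmxDl !mulmxDr -!scalemxAl -!scalemxAr !scalerA !mul1mx LMiM.
by rewrite (mulrC b) scalerDr !addrA.
Qed.

End SymmetricCongruence.

Lemma weighted_sqr_sum_gt0 (R : realDomainType) (nu x y : R) :
  0 < nu -> 0 < Num.max x y -> 0 < y ^+ 2 * nu + x ^+ 2.
Proof.
move=> nu_gt0; rewrite lt_max => /orP[x_gt0|y_gt0].
  by rewrite ltr_wpDl ?exprn_gt0 // mulr_ge0 ?sqr_ge0 ?ltW.
by rewrite ltr_wpDr ?sqr_ge0 // mulr_gt0 ?exprn_gt0.
Qed.

Lemma sqrt_weights_mul (R : rcfType) (nu x y c : R) :
  0 <= nu -> 0 <= x -> 0 <= y -> 0 < c ->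
  Num.sqrt nu * Num.sqrt (x ^+ 2 / c) * Num.sqrt (y ^+ 2 * nu / c) =
  y * nu * x / c.
Proof.
move=> nu_ge0 x_ge0 y_ge0 c_gt0.
have [c_neq0 c_ge0] := (lt0r_neq0 c_gt0, ltW c_gt0).
have x2c_ge0 : 0 <= x ^+ 2 / c by rewrite divr_ge0 ?sqr_ge0.
rewrite -sqrtrM // -(sqrtrM _ (mulr_ge0 nu_ge0 x2c_ge0)).
have -> : nu * (x ^+ 2 / c) * (y ^+ 2 * nu / c) = (y * nu * x / c) ^+ 2 by field.
by rewrite sqrtr_sqr ger0_norm // divr_ge0 ?mulr_ge0.
Qed.

Theorem corollary4p2 (R : rcfType) (n : nat) (nu alpha_u alpha_y : R)
    (M L : 'M[R]_n) (A : {set 'I_n}) :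
  (0 < n)%N -> 0 < nu -> 0 <= alpha_u -> 0 <= alpha_y ->
  0 < Num.max alpha_u alpha_y ->
  is_diag_mx M -> (forall i, 0 < M i i) ->
  let Pi := Pimx R A in
  let c := alpha_y ^+ 2 * nu + alpha_u ^+ 2 in
  let gamma1 := alpha_y ^+ 2 * nu / c in
  let gamma2 := alpha_u ^+ 2 / c in
  let Minv := invmx M in
  let B := alpha_y * nu *: (L *m Minv) - alpha_u *: 1%:M in
  let S := nu *: (L *m Minv *m L^T) + M - c^-1 *: (B *m Pi *m M *m Pi *m B^T) in
  let L1 := Num.sqrt nu *: (L *m sqrt_diag (1%:M - gamma1 *: Pi))
            + sqrt_diag (1%:M - gamma2 *: Pi) *m M in
  let Shat := L1 *m Minv *m L1^T in
  A = [set: 'I_n] -> Shat = S.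
Proof.
move=> _ nu_gt0 au_ge0 ay_ge0 max_gt0 M_diag M_pos Pi c g1 g2 Minv B S L1 Shat A_full.
have M_sym := diag_trmx M_diag.
have M_unit : M \in unitmx by apply: diag_unitmx => // i; exact: lt0r_neq0.
have c_gt0 : 0 < c by apply: weighted_sqr_sum_gt0.
have [c_neq0 c_ge0] := (lt0r_neq0 c_gt0, ltW c_gt0).
have nu_ge0 := ltW nu_gt0.
have g1_ge0 : 0 <= g1 by rewrite /g1 divr_ge0 ?mulr_ge0 ?sqr_ge0.
have g2_ge0 : 0 <= g2 by rewrite /g2 divr_ge0 ?sqr_ge0.
have g1_compl : 1 - g1 = g2 by rewrite /g1 /g2 /c in c_neq0 *; field.
have g2_compl : 1 - g2 = g1 by rewrite /g1 /g2 /c in c_neq0 *; field.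
rewrite /Shat /L1 /S /B /Pi A_full Pimx_setT !mulmx1 !scalemx1.
rewrite -!(raddfB (@scalar_mx _ n)) g1_compl g2_compl !sqrt_diag_scalar.
rewrite mul_mx_scalar mul_scalar_mx scalerA /Minv.
rewrite scale_sub_invmx // congr_invmx_mulmx // -(scaleNr alpha_u M).
rewrite !congr_invmx_scaleD // sqrt_weights_mul //.
rewrite mulrACA -!expr2 !sqr_sqrtr //.
by apply/matrixP=> i j; rewrite !mxE /g1 /g2 /c in c_neq0 *; field.
Qed.
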